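(* For every integer $n\geq 1$, $$2^n(1+x^2)\widehat{A}_n(x)=(1-x)^{n+1}P_n\!\left(\frac{1+x}{1-x}\right).$$
   Context: For a permutation $\pi=\pi(1)\pi(2)\cdots\pi(n)$ of $[n]=\{1,\ldots,n\}$, the number of alternating descents is ${\rm altdes}(\pi)=|\{2i: \pi(2i)<\pi(2i+1)\}\cup\{2i+1:\pi(2i+1)>\pi(2i+2)\}|$, where only indices $j\in\{1,\ldots,n-1\}$ are considered (so that $\pi(j+1)$ is defined). The alternating Eulerian polynomial is $\widehat{A}_n(x)=\sum_{\pi\in\mathfrak{S}_n}x^{{\rm altdes}(\pi)}$, where $\mathfrak{S}_n$ is the symmetric group on $[n]$. The derivative polynomials $P_n(x)$ (Hoffman) are defined by $P_n(\tan\theta)=\frac{d^n}{d\theta^n}\tan\theta$; equivalently $P_0(x)=x$ and $P_{n+1}(x)=(1+x^2)P_n'(x)$. *)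

From HB Require Import structures.
From mathcomp Require Import all_boot all_order all_algebra all_fingroup.
Set Implicit Arguments. Unset Strict Implicit. Unset Printing Implicit Defensive.
Import GRing.Theory Num.Theory.

(* Value pi(k+1) (1-based) of a permutation s : 'S_n at 0-based position k,
   0 if k is out of range (never used out of range below). *)
Definition pval (n : nat) (s : 'S_n) (k : nat) : nat :=
  match (insub k : option 'I_n) with
  | Some i => nat_of_ord (s i)
  | None => 0%N
  end.

(* Alternating descents.  A 0-based position k (0 <= k <= n-2) corresponds to
   the paper's index j = k+1.  j even (k odd): counted iff pi(j) < pi(j+1);
   j odd (k even): counted iff pi(j) > pi(j+1). *)
Definition altdes (n : nat) (s : 'S_n) : nat :=
  count (fun k => if odd k then (pval s k < pval s k.+1)%N
                  else (pval s k.+1 < pval s k)%N) (iota 0 n.-1).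

Definition altEuler (R : nzRingType) (n : nat) : {poly R} :=
  (\sum_(s : 'S_n) 'X^(altdes s))%R.

Fixpoint derivP (R : nzRingType) (n : nat) : {poly R} :=
  match n with
  | 0 => 'X
  | m.+1 => ((1 + 'X^2) * (derivP R m)^`())%R
  end.

From HB Require Import structures.
From Pilot Require Import Defs.
From mathcomp Require Import all_boot all_order all_algebra all_fingroup zify ring.
Import GRing.Theory Num.Theory.
Set Implicit Arguments. Unset Strict Implicit. Unset Printing Implicit Defensive.

(* Inserting the largest letter, or a new smallest one, at position [i] of a
   permutation [t] changes its number of alternating descents by an amount
   depending only on [i] and on the extreme inserted, except that the suffix of
   [t] after the insertion is now read with the opposite parity.  Reversing the
   relative order of the values of that suffix is a bijection that restores the
   parity, and averaging the two insertions yields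
     2 A_{n+1} = 2 (1 + x) A_n + (1 + x^2) ((1 - x) A_n' + (n - 1) A_n).
   The homogenization [homog M p = (1 - x)^M p((1 + x)/(1 - x))] conjugates
   [p |-> (1 + x^2) p'] into [q |-> (1 + x^2) (M q + (1 - x) q')], which turns
   the recurrence of the [P_n] into the one above; hence
   [homog (n + 1) P_n = 2^n (1 + x^2) A_n] by induction. *)

Definition alt_step (up : bool) (a c : nat) : bool := if up then a < c else c < a.

(* Counts the 0-based positions [j] at which [s] ascends if [up (+) odd j] and
   descends otherwise, so that [altdes] is [alt_des false]. *)
Fixpoint alt_des (up : bool) (s : seq nat) : nat :=
  if s is a :: t then
    (if t is c :: _ then alt_step up a c else false) + alt_des (~~ up) t
  else 0.

Lemma alt_des_cons2 up a b t :
  alt_des up [:: a, b & t] = alt_step up a b + alt_des (~~ up) (b :: t).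
Proof. by []. Qed.

Lemma alt_des_cat up a u c w :
  alt_des up ((a :: u) ++ c :: w) =
  alt_des up (a :: u) + alt_step (up (+) odd (size u)) (last a u) c
  + alt_des (up (+) ~~ odd (size u)) (c :: w).
Proof.
elim: u up a => [|b u IH] up a; first by rewrite /= addbF addbT.
have -> : up (+) odd (size (b :: u)) = ~~ up (+) odd (size u).
  by rewrite /=; case: up; case: (odd (size u)).
have -> : up (+) ~~ odd (size (b :: u)) = ~~ up (+) ~~ odd (size u).
  by rewrite /=; case: up; case: (odd (size u)).
by rewrite !cat_cons alt_des_cons2 -cat_cons IH alt_des_cons2 !addnA.
Qed.

Lemma alt_des_iota g j m :
  alt_des (odd j) (map g (iota j m)) =
  count (fun k => alt_step (odd k) (g k) (g k.+1)) (iota j m.-1).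
Proof.
elim: m j => [|[|m] IH] j //.
by rewrite [iota _ _]/= map_cons alt_des_cons2 -map_cons -[~~ odd j]/(odd j.+1) IH.
Qed.

Lemma alt_des_map (g : nat -> nat) (e : bool) s :
  {in s &, forall a c b, alt_step (b (+) e) (g a) (g c) = alt_step b a c} ->
  forall up, alt_des (up (+) e) (map g s) = alt_des up s.
Proof.
elim: s => [|a s IH] // g_step up.
rewrite /= -addNb IH => [|x y xs ys]; last by apply: g_step; rewrite inE ?xs ?ys orbT.
by case: s {IH} g_step => //= c s g_step; rewrite g_step ?mem_head ?inE ?eqxx ?orbT.
Qed.

Lemma alt_des_map_mono g s up :
  {in s &, {mono g : a c / a < c}} -> alt_des up (map g s) = alt_des up s.
Proof.
move=> gmono; rewrite -[up in LHS]addbF alt_des_map // => a c a_s c_s b.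
by rewrite addbF /alt_step !gmono.
Qed.

Lemma alt_des_map_anti g s up :
  {in s &, {mono g : a c /~ a < c}} -> alt_des (~~ up) (map g s) = alt_des up s.
Proof.
move=> ganti; rewrite -addbT alt_des_map // => a c a_s c_s b.
by rewrite addbT /alt_step !ganti //; case: b.
Qed.

Lemma uniq_subset_perm (T : eqType) (s1 s2 : seq T) :
  uniq s1 -> {subset s1 <= s2} -> size s2 <= size s1 -> perm_eq s1 s2.
Proof.
move=> s1_uniq s12 size21; have [_ eq12] := uniq_min_size s1_uniq s12 size21.
exact: uniq_perm (leq_size_uniq s1_uniq s12 size21) eq12.
Qed.

Lemma perm_map_involutive (T : eqType) (f : T -> T) (s : seq T) :
  uniq s -> {in s, forall x, f x \in s} -> {in s, involutive f} -> perm_eq (map f s) s.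
Proof.
move=> s_uniq f_s fK; apply: uniq_subset_perm; last by rewrite size_map.
  rewrite (map_inj_in_uniq _) // => x y xs ys eq_f.
  by rewrite -(fK x xs) eq_f fK.
by move=> _ /mapP[x xs ->]; apply: f_s.
Qed.

Definition perm_seqs n : seq (seq nat) := permutations (iota 0 n).

Lemma mem_perm_seqs n t : (t \in perm_seqs n) = perm_eq t (iota 0 n).
Proof. exact: mem_permutations. Qed.

Lemma perm_seqs_uniq n : uniq (perm_seqs n).
Proof. exact: permutations_uniq. Qed.

Lemma size_perm_seqs n : size (perm_seqs n) = n`!.
Proof. by rewrite size_permutations ?iota_uniq // size_iota. Qed.

Section PermSeqsMember.
Variables (n : nat) (t : seq nat).
Hypothesis t_perm : t \in perm_seqs n.

Lemma perm_seqs_elt_mem v : (v \in t) = (v < n).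
Proof. by move: t_perm; rewrite mem_perm_seqs => /perm_mem ->; rewrite mem_iota. Qed.

Lemma perm_seqs_elt_uniq : uniq t.
Proof. by move: t_perm; rewrite mem_perm_seqs => /perm_uniq ->; rewrite iota_uniq. Qed.

Lemma perm_seqs_elt_size : size t = n.
Proof. by move: t_perm; rewrite mem_perm_seqs => /perm_size ->; rewrite size_iota. Qed.

End PermSeqsMember.

Definition perm_seq n (s : 'S_n) : seq nat := [seq val (s i) | i <- enum 'I_n].

Lemma altdes_perm_seq n (s : 'S_n) : altdes s = alt_des false (perm_seq s).
Proof.
have -> : perm_seq s = map (Defs.pval s) (iota 0 n).
  by rewrite -val_enum_ord -map_comp; apply: eq_map => i; rewrite /= /Defs.pval valK.
by rewrite (alt_des_iota (Defs.pval s) 0 n).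
Qed.

Lemma perm_seq_inj n : injective (@perm_seq n).
Proof.
move=> s1 s2 /eq_in_map eq12; apply/permP => i.
by apply: val_inj; apply: eq12; rewrite mem_enum.
Qed.

Lemma perm_seq_perm n (s : 'S_n) : perm_eq (perm_seq s) (iota 0 n).
Proof.
rewrite -val_enum_ord /perm_seq (map_comp val s); apply: perm_map.
apply: uniq_perm; rewrite ?enum_uniq ?(map_inj_uniq (@perm_inj _ s)) ?enum_uniq //.
by move=> i; rewrite mem_enum -[i](permKV s) map_f ?mem_enum.
Qed.

Lemma perm_seq_index_enum n :
  perm_eq (map (@perm_seq n) (index_enum {perm 'I_n})) (perm_seqs n).
Proof.
apply: uniq_subset_perm.
- by rewrite (map_inj_uniq (@perm_seq_inj n)) index_enum_uniq.
- by move=> t /mapP[s _ ->]; rewrite mem_perm_seqs perm_seq_perm.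
by rewrite size_map size_perm_seqs -card_Sn cardE /enum_mem size_filter count_predT.
Qed.

Definition insert_at (i M : nat) (s : seq nat) : seq nat := take i s ++ M :: drop i s.

Lemma insert_at_perm i M s : perm_eq (insert_at i M s) (M :: s).
Proof. by rewrite /insert_at perm_catC /= perm_cons perm_catC cat_take_drop. Qed.

Lemma index_insert_at i M s :
  M \notin s -> i <= size s -> index M (insert_at i M s) = i.
Proof.
move=> Ms i_le; rewrite /insert_at index_cat ifN; last by apply: contra Ms; apply: mem_take.
by rewrite /= eqxx addn0 size_takel.
Qed.

Lemma insert_at_inj i j M s t : M \notin s -> M \notin t ->
  i <= size s -> j <= size t -> insert_at i M s = insert_at j M t -> i = j /\ s = t.
Proof.
move=> Ms Mt i_le j_le eq_ins.
have eq_ij : i = j by rewrite -(index_insert_at Ms i_le) eq_ins index_insert_at.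
split=> //; subst j; move: eq_ins; rewrite /insert_at => /eqP.
rewrite eqseq_cat ?size_takel // => /andP[/eqP eq_take /eqP[eq_drop]].
by rewrite -(cat_take_drop i s) -(cat_take_drop i t) eq_take eq_drop.
Qed.

Lemma perm_seqs_insert M n (L : seq (seq nat)) :
  uniq L -> size L = n`! -> {in L, forall s, M :: s \in perm_seqs n.+1} ->
  perm_eq [seq insert_at i M s | s <- L, i <- iota 0 n.+1] (perm_seqs n.+1).
Proof.
move=> L_uniq L_size L_perm.
have L_fresh s : s \in L -> M \notin s /\ size s = n.
  move/L_perm=> Ms_perm; have /andP[Ms _] : uniq (M :: s) := perm_seqs_elt_uniq Ms_perm.
  by have [] := perm_seqs_elt_size Ms_perm.
apply: uniq_subset_perm.
- apply: allpairs_uniq; rewrite ?iota_uniq // => -[s i] [t j].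
  move=> /allpairsP[[s' i'] [s_L i_iota [-> ->]]].
  move=> /allpairsP[[t' j'] [t_L j_iota [-> ->]]].
  move: i_iota j_iota; rewrite !mem_iota !ltnS /= in s_L t_L * => i_le j_le.
  have [Ms s_size] := L_fresh _ s_L; have [Mt t_size] := L_fresh _ t_L.
  by move=> /insert_at_inj[| | |//| ->->]; rewrite ?s_size ?t_size.
- move=> _ /allpairsP[[s i] [s_L _ ->]].
  rewrite mem_perm_seqs (perm_trans (insert_at_perm _ _ _)) // -mem_perm_seqs.
  exact: L_perm.
by rewrite size_allpairs L_size size_iota size_perm_seqs factS mulnC.
Qed.

Lemma perm_seqs_insert_max n :
  perm_eq [seq insert_at i n s | s <- perm_seqs n, i <- iota 0 n.+1] (perm_seqs n.+1).
Proof.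
apply: perm_seqs_insert; rewrite ?perm_seqs_uniq ?size_perm_seqs // => s.
rewrite !mem_perm_seqs -addn1 iotaD add0n => s_perm.
by rewrite perm_sym perm_catC perm_cons perm_sym.
Qed.

Lemma perm_seqs_insert_min n :
  perm_eq [seq insert_at i 0 s | s <- map (map succn) (perm_seqs n), i <- iota 0 n.+1]
          (perm_seqs n.+1).
Proof.
apply: perm_seqs_insert.
- by rewrite (map_inj_uniq (inj_map succn_inj)) perm_seqs_uniq.
- by rewrite size_map size_perm_seqs.
move=> _ /mapP[s s_perm ->]; rewrite !mem_perm_seqs /= perm_cons -add1n iotaDl.
by apply: perm_map; rewrite -mem_perm_seqs.
Qed.

Definition insert_gain (h : bool) (n i : nat) : nat := ((0 < i) + (i < n)) * (odd i != h).

Lemma alt_des_insert_at (h : bool) M s i : i <= size s ->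
  {in s, forall v, (v < M) = h /\ (M < v) = ~~ h} ->
  alt_des false (insert_at i M s) =
  insert_gain h (size s) i + alt_des false (take i s) + alt_des (~~ odd i) (drop i s).
Proof.
move=> i_le M_ext.
have step_to b v : v \in s -> alt_step b v M = (b == h).
  by move=> /M_ext[lt_vM lt_Mv]; rewrite /alt_step lt_vM lt_Mv; case: b; case: (h).
have step_from b v : v \in s -> alt_step b M v = (b != h).
  by move=> /M_ext[lt_vM lt_Mv]; rewrite /alt_step lt_vM lt_Mv; case: b; case: (h).
have alt_des_from_M : alt_des (odd i) (M :: drop i s) =
    ((i < size s) && (odd i != h)) + alt_des (~~ odd i) (drop i s).
  case E: (drop i s) => [|v w].
    by move: (size_drop i s); rewrite E => /eqP; rewrite eq_sym subn_eq0 ltnNge => ->.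
  have v_s : v \in s by rewrite -(cat_take_drop i s) E mem_cat mem_head orbT.
  have -> : i < size s by rewrite -subn_gt0 -size_drop E.
  by rewrite alt_des_cons2 step_from.
rewrite /insert_at /insert_gain mulnDl !mulnb.
case: i i_le alt_des_from_M => [|j] j_lt alt_des_from_M.
  by rewrite take0 cat0s alt_des_from_M /= add0n addn0.
case E: (take j.+1 s) => [|a u]; first by move: (size_takel j_lt); rewrite E.
have u_size : size u = j by move: (size_takel j_lt); rewrite E => -[].
have last_s : last a u \in s by rewrite -(cat_take_drop j.+1 s) E mem_cat mem_last.
rewrite alt_des_cat u_size step_to // -[~~ odd j]/(odd j.+1) alt_des_from_M.
have -> : (false (+) odd j == h) = (odd j.+1 != h) by rewrite /=; case: (odd j); case: (h).
by rewrite ltn0Sn andTb; ring.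
Qed.

Lemma sorted_ltn_nth_mono (s : seq nat) : sorted ltn s ->
  {in [pred i | i < size s] &, {mono nth 0 s : i j / i < j}}.
Proof.
move=> s_sorted i j i_lt j_lt; have s_homo := sorted_ltn_nth ltn_trans 0 s_sorted.
case: (ltngtP i j) => [ij | ji | ->]; [exact: s_homo | | exact: ltnn].
by apply/negbTE; rewrite -leqNgt ltnW // s_homo.
Qed.

Section RankComplement.
Variable q : seq nat.
Hypothesis q_uniq : uniq q.

Let r := sort leq q.
Let N := (size r).-1.

Definition rank_compl (v : nat) : nat := nth 0 r (N - index v r).

Let r_sorted : sorted ltn r.
Proof. by rewrite ltn_sorted_uniq_leq sort_uniq q_uniq sort_sorted //; exact: leq_total. Qed.

Let mem_r v : (v \in r) = (v \in q).
Proof. exact: mem_sort. Qed.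

Let index_lt v : v \in q -> index v r < size r.
Proof. by rewrite index_mem mem_r. Qed.

Let index_le v : v \in q -> index v r <= N.
Proof. by move/index_lt; rewrite /N; case: (size r). Qed.

Let rev_index_lt v : v \in q -> N - index v r < size r.
Proof.
move=> vq; apply: leq_ltn_trans (leq_subr _ _) _.
by move: (index_lt vq); rewrite /N; case: (size r).
Qed.

Lemma rank_compl_mem v : v \in q -> rank_compl v \in q.
Proof. by move=> vq; rewrite -mem_r mem_nth ?rev_index_lt. Qed.

Lemma rank_complK : {in q, involutive rank_compl}.
Proof.
move=> v vq; rewrite {1}/rank_compl index_uniq ?rev_index_lt ?sort_uniq //.
by rewrite subKn ?index_le // nth_index ?mem_r.
Qed.

Lemma rank_compl_anti : {in q &, {mono rank_compl : a c /~ a < c}}.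
Proof.
move=> a c aq cq; rewrite /rank_compl sorted_ltn_nth_mono ?inE ?rev_index_lt //.
have -> : (c < a) = (index c r < index a r).
  by rewrite -(@sorted_ltn_nth_mono r r_sorted (index c r) (index a r)) ?inE ?index_lt //
    !nth_index ?mem_r.
have := index_le aq; have := index_le cq; lia.
Qed.

End RankComplement.

Lemma rank_compl_perm_eq q q' : perm_eq q q' -> rank_compl q = rank_compl q'.
Proof.
by move/(perm_sortP leq_total leq_trans anti_leq) => eq_sort; rewrite /rank_compl eq_sort.
Qed.

Definition compl_suffix (i : nat) (t : seq nat) : seq nat :=
  take i t ++ map (rank_compl (drop i t)) (drop i t).

Section ComplSuffix.
Variables (i : nat) (t : seq nat).
Hypotheses (t_uniq : uniq t) (i_le : i <= size t).

Let d_uniq : uniq (drop i t).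
Proof. by rewrite drop_uniq. Qed.

Let compl_drop_perm : perm_eq (map (rank_compl (drop i t)) (drop i t)) (drop i t).
Proof. exact: perm_map_involutive d_uniq (@rank_compl_mem _) (rank_complK d_uniq). Qed.

Lemma take_compl_suffix : take i (compl_suffix i t) = take i t.
Proof. by rewrite take_size_cat // size_takel. Qed.

Lemma drop_compl_suffix :
  drop i (compl_suffix i t) = map (rank_compl (drop i t)) (drop i t).
Proof. by rewrite drop_size_cat // size_takel. Qed.

Lemma compl_suffix_perm : perm_eq (compl_suffix i t) t.
Proof.
by rewrite -[t in perm_eq _ t](cat_take_drop i) perm_cat2l.
Qed.

Lemma compl_suffixK : compl_suffix i (compl_suffix i t) = t.
Proof.
rewrite {1}/compl_suffix take_compl_suffix drop_compl_suffix.
rewrite (rank_compl_perm_eq compl_drop_perm).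
rewrite -map_comp -[RHS](cat_take_drop i); congr (_ ++ _).
by rewrite -[RHS]map_id; apply/eq_in_map => v vd /=; rewrite rank_complK.
Qed.

End ComplSuffix.

Lemma perm_seqs_compl_suffix n i : i <= n ->
  perm_eq (map (compl_suffix i) (perm_seqs n)) (perm_seqs n).
Proof.
move=> i_le; apply: perm_map_involutive (perm_seqs_uniq n) _ _ => t t_perm;
  have [t_uniq t_size] := (perm_seqs_elt_uniq t_perm, perm_seqs_elt_size t_perm).
  by rewrite mem_perm_seqs (perm_trans (compl_suffix_perm _ t_uniq)) -?mem_perm_seqs.
by rewrite compl_suffixK ?t_size.
Qed.

Lemma sum_alt_des_compl_suffix (V : nmodType) n i up (F : nat -> nat -> V) : i <= n ->
  (\sum_(t <- perm_seqs n) F (alt_des false (take i t)) (alt_des (~~ up) (drop i t)) =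
   \sum_(t <- perm_seqs n) F (alt_des false (take i t)) (alt_des up (drop i t)))%R.
Proof.
move=> i_le; rewrite -(perm_big _ (perm_seqs_compl_suffix i_le)) big_map.
apply: eq_big_seq => t t_perm.
have [t_uniq t_size] := (perm_seqs_elt_uniq t_perm, perm_seqs_elt_size t_perm).
rewrite take_compl_suffix ?drop_compl_suffix ?t_size // alt_des_map_anti //.
by apply: rank_compl_anti; rewrite drop_uniq.
Qed.

Definition is_alt_des (t : seq nat) (k : nat) : bool :=
  alt_step (odd k) (nth 0 t k) (nth 0 t k.+1).

(* The alternating descents of [t] other than the one possibly at position
   [i.-1], across the cut [t = take i t ++ drop i t]. *)
Definition alt_des_cut (i : nat) (t : seq nat) : nat :=
  alt_des false (take i t) + alt_des (odd i) (drop i t).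

Lemma alt_des_count t : alt_des false t = count (is_alt_des t) (iota 0 (size t).-1).
Proof. by rewrite -{1}(mkseq_nth 0 t) /mkseq (alt_des_iota (nth 0 t) 0). Qed.

Lemma alt_des_cut_inner t j : j.+1 < size t ->
  alt_des false t = alt_des_cut j.+1 t + is_alt_des t j.
Proof.
move=> j_lt; rewrite /alt_des_cut -{2 3}(mkseq_nth 0 t) /mkseq -map_take -map_drop.
rewrite take_iota drop_iota (minn_idPl (ltnW j_lt)) (alt_des_iota _ 0) add0n.
rewrite -[odd j.+1]/(odd (0 + j.+1)) (alt_des_iota _ (0 + j.+1)) alt_des_count.
have -> : (size t).-1 = j + (1 + (size t - j.+1).-1) by lia.
by rewrite !iotaD !count_cat /= add0n addn0 addnA addn1 addnAC.
Qed.

Lemma alt_des_cut0 t : alt_des_cut 0 t = alt_des false t.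
Proof. by rewrite /alt_des_cut take0 drop0. Qed.

Lemma alt_des_cut_size t : alt_des_cut (size t) t = alt_des false t.
Proof. by rewrite /alt_des_cut take_size drop_size addn0. Qed.

Local Open Scope ring_scope.

Section AltEulerRecurrence.
Variable R : comNzRingType.
Implicit Type t : seq nat.

Lemma sum_Xn_count_pred (T : Type) (c : pred T) (r : seq T) (a : nat) :
  \sum_(j <- r) 'X^(a - c j)%N =
  'X^(a.-1) *+ count c r + 'X^a *+ count (predC c) r :> {poly R}.
Proof.
elim: r => [|j r IH]; first by rewrite big_nil !mulr0n addr0.
by rewrite big_cons IH /=; case: (c j); rewrite /= ?subn1 ?subn0 !mulrS; ring.
Qed.

Lemma sum_Xn_count_drop1 (T : Type) (c : pred T) (r : seq T) :
  \sum_(j <- r) 'X^(count c r - c j)%N =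
  (1 - 'X) * ('X^(count c r))^`() + 'X^(count c r) *+ size r :> {poly R}.
Proof.
rewrite sum_Xn_count_pred derivXn -(count_predC c r).
case: (count c r) => [|a]; first by rewrite !mulr0n mulr0 !add0r.
by rewrite exprS /= mulrnDr; ring.
Qed.

Lemma altEuler_perm_seqs n :
  altEuler R n = \sum_(t <- perm_seqs n) 'X^(alt_des false t).
Proof.
rewrite /altEuler; under eq_bigr do rewrite altdes_perm_seq.
by rewrite -(perm_big _ (perm_seq_index_enum n)) big_map.
Qed.

Lemma altEuler_insert_extreme (h : bool) n :
  altEuler R n.+1 = \sum_(t <- perm_seqs n) \sum_(i <- iota 0 n.+1)
    'X^(insert_gain h n i) * 'X^(alt_des false (take i t) + alt_des (~~ odd i) (drop i t)).
Proof.
rewrite altEuler_perm_seqs.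
case: h; [rewrite -(perm_big _ (perm_seqs_insert_max n)) big_allpairs_dep |
          rewrite -(perm_big _ (perm_seqs_insert_min n)) big_allpairs_dep big_map];
  apply: eq_big_seq => t t_perm; have t_size := perm_seqs_elt_size t_perm;
  apply: eq_big_seq => i; rewrite mem_iota ltnS => /andP[_ i_le]; rewrite -exprD addnA.
- rewrite (@alt_des_insert_at true) ?t_size // => v.
  by rewrite (perm_seqs_elt_mem t_perm) => v_lt; rewrite v_lt ltnNge ltnW.
- rewrite (@alt_des_insert_at false) ?size_map ?t_size //; last by move=> _ /mapP[v _ ->].
  by rewrite -map_take -map_drop !alt_des_map_mono // => a c _ _; exact: ltnS.
Qed.

Lemma Xn_neq_sum (b : bool) k :
  'X^((b != true) * k) + 'X^((b != false) * k) = 1 + 'X^k :> {poly R}.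
Proof. by case: b; rewrite mul0n mul1n // addrC. Qed.

Lemma sum_insert_gain_cut n t : t \in perm_seqs n.+1 ->
  \sum_(i <- iota 0 n.+2)
     ('X^(insert_gain true n.+1 i) + 'X^(insert_gain false n.+1 i)) * 'X^(alt_des_cut i t)
  = ((1 + 'X) * 'X^(alt_des false t)) *+ 2
    + (1 + 'X^2) * ((1 - 'X) * ('X^(alt_des false t))^`() + 'X^(alt_des false t) *+ n)
  :> {poly R}.
Proof.
move=> t_perm; have t_size := perm_seqs_elt_size t_perm.
have gain_end h i : (i == 0) || (i == n.+1) -> insert_gain h n.+1 i = ((odd i != h) * 1)%N.
  by case/orP=> /eqP->; rewrite /insert_gain ltnn ltn0Sn /= mul1n muln1.
have gain_inner h j : j \in iota 0 n -> insert_gain h n.+1 j.+1 = ((odd j.+1 != h) * 2)%N.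
  by rewrite mem_iota add0n /insert_gain !ltnS => /andP[_ ->]; rewrite mulnC.
have cut_inner j : j \in iota 0 n ->
    alt_des_cut j.+1 t = (count (is_alt_des t) (iota 0 n) - is_alt_des t j)%N.
  rewrite mem_iota => /andP[_]; rewrite -ltnS -t_size => /alt_des_cut_inner.
  by rewrite alt_des_count t_size => ->; rewrite addnK.
have -> : iota 0 n.+2 = 0%N :: map succn (iota 0 n) ++ [:: n.+1].
  by rewrite -addn1 iotaD /= -(iotaDl 1) add1n.
have alt_count : count (is_alt_des t) (iota 0 n) = alt_des false t.
  by rewrite alt_des_count t_size.
have cut_last : alt_des_cut n.+1 t = alt_des false t by rewrite -t_size alt_des_cut_size.
rewrite big_cons big_cat big_map big_seq1 !gain_end ?eqxx ?orbT // !Xn_neq_sum /=.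
under eq_big_seq => j j_iota do rewrite !gain_inner // Xn_neq_sum cut_inner //.
rewrite -mulr_sumr sum_Xn_count_drop1 size_iota alt_count alt_des_cut0 cut_last.
by rewrite expr1 mulr2n; ring.
Qed.

Lemma altEuler_rec n :
  altEuler R n.+2 *+ 2 = ((1 + 'X) * altEuler R n.+1) *+ 2
     + (1 + 'X^2) * ((1 - 'X) * (altEuler R n.+1)^`() + altEuler R n.+1 *+ n).
Proof.
rewrite mulr2n {1}(altEuler_insert_extreme true) (altEuler_insert_extreme false).
rewrite -big_split /=; under eq_bigr do rewrite -big_split /=.
transitivity (\sum_(t <- perm_seqs n.+1) \sum_(i <- iota 0 n.+2)
  ('X^(insert_gain true n.+1 i) + 'X^(insert_gain false n.+1 i)) * 'X^(alt_des_cut i t)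
  : {poly R}).
  rewrite exchange_big [RHS]exchange_big; apply: eq_big_seq => i.
  rewrite -[_ :: _]/(iota 0 n.+2) mem_iota ltnS => /andP[_ i_le].
  under eq_bigr do rewrite -mulrDl.
  exact: (sum_alt_des_compl_suffix (odd i)
    (fun a b => ('X^(insert_gain true n.+1 i) + 'X^(insert_gain false n.+1 i)) * 'X^(a + b))).
rewrite (eq_big_seq _ (fun t t_perm => sum_insert_gain_cut t_perm)) altEuler_perm_seqs.
rewrite big_split /= raddf_sum !mulr_sumr -!sumrMnl.
by rewrite -[X in _ = _ + _ * X]big_split mulr_sumr.
Qed.

End AltEulerRecurrence.

Section Homogenization.
Variable R : comNzRingType.
Implicit Type p q : {poly R}.

(* The polynomial [(1 - x)^M p((1 + x)/(1 - x))] when [size p <= M.+1]. *)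
Definition homog (M : nat) p : {poly R} :=
  \sum_(k < M.+1) p`_k *: ((1 + 'X) ^+ k * (1 - 'X) ^+ (M - k)).

Fact homog_is_linear M : linear (homog M).
Proof.
move=> a p q; rewrite /homog scaler_sumr -big_split; apply: eq_bigr => k _.
by rewrite coefD coefZ scalerDl scalerA.
Qed.

HB.instance Definition _ M :=
  GRing.isLinear.Build R {poly R} {poly R} _ (homog M) (homog_is_linear M).

Lemma homog_Xn M j : (j <= M)%N -> homog M 'X^j = (1 + 'X) ^+ j * (1 - 'X) ^+ (M - j).
Proof.
move=> j_le; rewrite /homog (bigD1 (Ordinal (_ : j < M.+1)%N)) //= big1.
  by rewrite coefXn eqxx scale1r addr0.
by move=> k; rewrite -val_eqE coefXn => /negbTE->; rewrite scale0r.
Qed.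

Definition dhomog (m : nat) q : {poly R} := (1 + 'X^2) * (q *+ m + (1 - 'X) * q^`()).

Fact dhomog_is_linear m : linear (dhomog m).
Proof. by move=> a p q; rewrite /dhomog derivD derivZ mulrnDl -!mul_polyC; ring. Qed.

HB.instance Definition _ m :=
  GRing.isLinear.Build R {poly R} {poly R} _ (dhomog m) (dhomog_is_linear m).

Lemma homog_mul_deriv_Xn m k : (k <= m)%N ->
  homog m.+1 ((1 + 'X^2) * ('X^k)^`()) = dhomog m (homog m 'X^k).
Proof.
move=> k_le; rewrite derivXn homog_Xn // /dhomog derivM !deriv_exp.
rewrite derivD derivB derivC derivX add0r sub0r.
have [r ->] : exists r, m = (k + r)%N by exists (m - k)%N; rewrite subnKC.
rewrite addKn; case: k {k_le} => [|k].
  by rewrite mulr0n mulr0 linear0 add0n; case: r => [|r]; rewrite /= ?exprS; ring.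
rewrite mulrnAr linearMn mulrDl mul1r linearD -exprD /= !homog_Xn; try lia.
have -> : ((k.+1 + r).+1 - k = r.+2)%N by lia.
have -> : ((k.+1 + r).+1 - (2 + k) = r)%N by lia.
by case: r => [|r]; rewrite ?exprS; ring.
Qed.

Lemma homog_mul_deriv m p : (size p <= m.+1)%N ->
  homog m.+1 ((1 + 'X^2) * p^`()) = dhomog m (homog m p).
Proof.
move=> p_size; have -> : p = \sum_(k < m.+1) p`_k *: 'X^k.
  rewrite -poly_def; apply/polyP => i; rewrite coef_poly; case: ltnP => // i_ge.
  by rewrite nth_default // (leq_trans p_size i_ge).
rewrite raddf_sum mulr_sumr [homog m.+1 _]linear_sum [homog m _]linear_sum linear_sum /=.
apply: eq_bigr => k _; rewrite derivZ -scalerAr !linearZ /= homog_mul_deriv_Xn //.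
by rewrite -ltnS.
Qed.

End Homogenization.

Lemma horner_homog (F : fieldType) M (p : {poly F}) x :
  (size p <= M.+1)%N -> x != 1 -> (homog M p).[x] = (1 - x) ^+ M * p.[(1 + x) / (1 - x)].
Proof.
move=> p_size x_neq1; have x1_neq0 : 1 - x != 0 by rewrite subr_eq0 eq_sym.
rewrite (horner_coef_wide _ p_size) mulr_sumr horner_sum; apply: eq_bigr => k _.
have k_le : (k <= M)%N by rewrite -ltnS.
have -> : (1 - x) ^+ M = (1 - x) ^+ (M - k) * (1 - x) ^+ k by rewrite -exprD subnK.
rewrite hornerZ hornerM !horner_exp !hornerD hornerN !hornerC hornerX expr_div_n.
by field; rewrite expf_neq0.
Qed.

Lemma size_derivP (R : nzRingType) n : (size (derivP R n) <= n.+2)%N.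
Proof.
elim: n => [|n IH] /=; first by rewrite size_polyX.
apply: leq_trans (size_mul_leq _ _) _.
have size_1X2 : (size ((1 + 'X^2)%R : {poly R}) <= 3)%N.
  by apply: leq_trans (size_polyD _ _) _; rewrite size_poly1 size_polyXn.
have size_deriv : (size (derivP R n)^`() <= n.+1)%N.
  by apply: leq_trans (size_poly _ _) _; move: IH; case: (size _).
rewrite -subn1 leq_subLR; apply: leq_trans (leq_add size_1X2 size_deriv) _; lia.
Qed.

Section HomogDerivP.
Variable R : comNzRingType.

Lemma altEuler1 : altEuler R 1 = 1.
Proof. by rewrite altEuler_perm_seqs /perm_seqs /= big_seq1 expr0. Qed.

Lemma dhomog_altEuler n :
  dhomog n.+2 ((1 + 'X^2) * altEuler R n.+1) = ((1 + 'X^2) * altEuler R n.+2) *+ 2.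
Proof.
rewrite -mulrnAr altEuler_rec /dhomog derivM derivD derivC derivXn add0r.
by rewrite expr1; ring.
Qed.

Lemma homog_derivP n :
  homog n.+2 (derivP R n.+1) = ((1 + 'X^2) * altEuler R n.+1) *+ 2 ^ n.+1.
Proof.
elim: n => [|n IH].
  rewrite /= derivX mulr1 altEuler1 mulr1 linearD /= -{1}(expr0 'X) !homog_Xn //.
  by rewrite !expr0; ring.
rewrite -[derivP R n.+2]/((1 + 'X^2) * (derivP R n.+1)^`()).
rewrite homog_mul_deriv ?size_derivP // IH linearMn /=.
by rewrite dhomog_altEuler -mulrnA -expnS.
Qed.

End HomogDerivP.

Theorem mainTheorem1 (R : realFieldType) (n : nat) (x : R) :
  (1 <= n)%N -> x != 1 ->
  2 ^+ n * (1 + x ^+ 2) * (altEuler R n).[x]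
  = (1 - x) ^+ n.+1 * (derivP R n).[(1 + x) / (1 - x)].
Proof.
case: n => [//|n] _ x_neq1.
rewrite -horner_homog ?size_derivP // homog_derivP hornerMn hornerM.
by rewrite !hornerE -mulrA -natrX mulr_natl.
Qed.
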